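(* Let $0\to\mathfrak{r}\to\mathfrak{f}\xrightarrow{\rho}\mathfrak{g}\to0$ be a free presentation of a Leibniz algebra $\mathfrak{g}$. Let $\mathfrak{n}$ be a two-sided ideal of $\mathfrak{g}$ and $\mathfrak{s}$ a two-sided ideal of $\mathfrak{f}$ such that $\rho(\mathfrak{s})=\mathfrak{n}$ (i.e. $\mathfrak{n}$ corresponds to $(\mathfrak{s}+\mathfrak{r})/\mathfrak{r}$ under $\mathfrak{g}\cong\mathfrak{f}/\mathfrak{r}$). Then there is a natural exact sequence $$0\to\frac{\mathfrak{r}\cap[\mathfrak{f},\mathfrak{s}]_{\mathrm{Lie}}}{[\mathfrak{f},\mathfrak{r}]_{\mathrm{Lie}}\cap[\mathfrak{f},\mathfrak{s}]_{\mathrm{Lie}}}\to\mathcal{M}^{\mathrm{Lie}}(\mathfrak{g})\to\mathcal{M}^{\mathrm{Lie}}(\mathfrak{g}/\mathfrak{n})\to\frac{\mathfrak{n}\cap[\mathfrak{g},\mathfrak{g}]_{\mathrm{Lie}}}{[\mathfrak{g},\mathfrak{n}]_{\mathrm{Lie}}}\to0.$$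
   Context: Fix a field $\mathbb{K}$ with $\frac12\in\mathbb{K}$. A Leibniz algebra is a $\mathbb{K}$-vector space with a bilinear bracket satisfying $[x,[y,z]]=[[x,y],z]-[[x,z],y]$. For two-sided ideals $\mathfrak{m},\mathfrak{n}$, $[\mathfrak{m},\mathfrak{n}]_{\mathrm{Lie}}$ is the subspace spanned by all $[m,n]+[n,m]$. A free presentation of $\mathfrak{g}$ is a short exact sequence $0\to\mathfrak{r}\to\mathfrak{f}\to\mathfrak{g}\to0$ with $\mathfrak{f}$ a free Leibniz algebra. The Schur $\mathrm{Lie}$-multiplier is $\mathcal{M}^{\mathrm{Lie}}(\mathfrak{g})=\frac{\mathfrak{r}\cap[\mathfrak{f},\mathfrak{f}]_{\mathrm{Lie}}}{[\mathfrak{f},\mathfrak{r}]_{\mathrm{Lie}}}$, independent of the presentation up to isomorphism. *)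

From HB Require Import structures.
From mathcomp Require Import all_boot all_algebra.
Set Implicit Arguments. Unset Strict Implicit. Unset Printing Implicit Defensive.
Import GRing.Theory.
Local Open Scope ring_scope.

Section Leibniz.
Variable K : fieldType.

Definition leibniz (V : lmodType K) (br : V -> V -> V) : Prop :=
  [/\ (forall a x y z, br (a *: x + y) z = a *: br x z + br y z),
      (forall a x y z, br z (a *: x + y) = a *: br z x + br z y) &
      (forall x y z, br x (br y z) = br (br x y) z - br (br x z) y)].

Definition leibniz_hom (V W : lmodType K) (brV : V -> V -> V) (brW : W -> W -> W)
  (phi : V -> W) : Prop :=
  (forall a x y, phi (a *: x + y) = a *: phi x + phi y) /\
  (forall x y, phi (brV x y) = brW (phi x) (phi y)).

Definition free_leibniz (F : lmodType K) (brF : F -> F -> F) : Prop :=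
  leibniz brF /\
  exists (X : Type) (i : X -> F),
    forall (L : lmodType K) (brL : L -> L -> L), leibniz brL ->
    forall h : X -> L,
      exists! phi : F -> L, leibniz_hom brF brL phi /\ (forall x, phi (i x) = h x).

Definition subspace (V : lmodType K) (A : V -> Prop) : Prop :=
  A 0 /\ (forall a x y, A x -> A y -> A (a *: x + y)).

Definition ideal (V : lmodType K) (br : V -> V -> V) (I : V -> Prop) : Prop :=
  subspace I /\ (forall x y, I y -> I (br x y) /\ I (br y x)).

Definition full (V : Type) : V -> Prop := fun _ => True.
Definition meet (V : Type) (A B : V -> Prop) : V -> Prop := fun x => A x /\ B x.
Definition kernel (V W : lmodType K) (phi : V -> W) : V -> Prop :=
  fun x => phi x = 0.

Definition lie_br (V : lmodType K) (br : V -> V -> V) (M N : V -> Prop) : V -> Prop :=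
  fun x => exists s : seq (K * V * V),
    (forall p, p \in s -> M p.1.2 /\ N p.2) /\
    x = \sum_(p <- s) p.1.1 *: (br p.1.2 p.2 + br p.2 p.1.2).

(* Schur Lie-multiplier of the algebra presented by f with kernel r:
   numerator r ∩ [f,f]_Lie, denominator [f,r]_Lie (as subspaces of f). *)
Definition schur_num (F : lmodType K) (br : F -> F -> F) (R : F -> Prop) :=
  meet R (lie_br br (@full F) (@full F)).
Definition schur_den (F : lmodType K) (br : F -> F -> F) (R : F -> Prop) :=
  lie_br br (@full F) R.

(* A sequence of subquotients A_i / B_i (A_i, B_i subspaces of V_i) with maps
   induced by f_i : V_i -> V_{i+1}:
     0 -> A1/B1 -> A2/B2 -> A3/B3 -> A4/B4 -> 0
   is a well-defined exact sequence. *)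
Definition induces (V W : lmodType K) (A B : V -> Prop) (C D : W -> Prop)
  (f : V -> W) : Prop :=
  (forall x, A x -> C (f x)) /\ (forall x, B x -> D (f x)).

Definition exact_at (V1 V2 V3 : lmodType K) (A1 : V1 -> Prop) (f : V1 -> V2)
  (A2 B2 : V2 -> Prop) (g : V2 -> V3) (B3 : V3 -> Prop) : Prop :=
  forall x, A2 x -> (B3 (g x) <-> exists y, A1 y /\ B2 (x - f y)).

Definition exact_subquot4 (V1 V2 V3 V4 : lmodType K)
  (A1 B1 : V1 -> Prop) (f1 : V1 -> V2) (A2 B2 : V2 -> Prop) (f2 : V2 -> V3)
  (A3 B3 : V3 -> Prop) (f3 : V3 -> V4) (A4 B4 : V4 -> Prop) : Prop :=
  induces A1 B1 A2 B2 f1 /\ induces A2 B2 A3 B3 f2 /\ induces A3 B3 A4 B4 f3 /\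
  (* injectivity at A1/B1 *)
  (forall x, A1 x -> B2 (f1 x) -> B1 x) /\
  exact_at A1 f1 A2 B2 f2 B3 /\
  exact_at A2 f2 A3 B3 f3 B4 /\
  (* surjectivity onto A4/B4 *)
  (forall z, A4 z -> exists x, A3 x /\ B4 (z - f3 x)).

End Leibniz.

From HB Require Import structures.
From mathcomp Require Import all_boot all_algebra.
Set Implicit Arguments. Unset Strict Implicit. Unset Printing Implicit Defensive.
Import GRing.Theory.
Local Open Scope ring_scope.

(* Identify g with f/r and g/n with f/r', where r' = s + r is the preimage of
   n under rho.  The three maps are induced by the inclusions r <= r' and by rho,
   and exactness reduces to three facts about the Lie brackets of subspaces:
   [f, s + r] = [f, s] + [f, r]; [f, r] <= r because r is an ideal; and rho maps
   [f, X] onto [g, rho X] since it is a surjective homomorphism. *)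

Section Packaging.
Variable K : fieldType.

Definition linear_of (V W : lmodType K) (phi : V -> W) (phi_lin : linear phi) :
  {linear V -> W} := HB.pack phi (GRing.isLinear.Build K V W *:%R phi phi_lin).

Lemma leibniz_bilinear (V : lmodType K) (br : V -> V -> V) :
  leibniz br -> bilinear_for *:%R *:%R br.
Proof. by case=> brl brr _; split=> z a x y; [exact: brl | exact: brr]. Qed.

Definition bilinear_of (V : lmodType K) (br : V -> V -> V) (br_leib : leibniz br) :
  {bilinear V -> V -> V} :=
  HB.pack br (bilinear_isBilinear.Build K V V V *:%R *:%R br (leibniz_bilinear br_leib)).

End Packaging.

Section LieBracket.
Variables (K : fieldType) (V : lmodType K) (br : V -> V -> V).
Implicit Types M N I : V -> Prop.

Definition addsp (A B : V -> Prop) : V -> Prop :=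
  fun x => exists a b, [/\ A a, B b & x = a + b].

Lemma lie_br0 M N : lie_br br M N 0.
Proof. by exists [::]; rewrite big_nil. Qed.

Lemma lie_brP M N a x y :
  lie_br br M N x -> lie_br br M N y -> lie_br br M N (a *: x + y).
Proof.
move=> [s1 [Hs1 ->]] [s2 [Hs2 ->]].
exists ([seq (a * p.1.1, p.1.2, p.2) | p <- s1] ++ s2); split.
  by move=> p; rewrite mem_cat => /orP[/mapP[q /Hs1 Mq ->] | /Hs2].
rewrite big_cat big_map scaler_sumr; congr (_ + _).
by apply: eq_bigr => p _; rewrite scalerA.
Qed.

Lemma lie_brD M N x y :
  lie_br br M N x -> lie_br br M N y -> lie_br br M N (x + y).
Proof. by move=> Lx Ly; have := lie_brP 1 Lx Ly; rewrite scale1r. Qed.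

Lemma lie_brB M N x y :
  lie_br br M N x -> lie_br br M N y -> lie_br br M N (x - y).
Proof. by move=> Lx Ly; have := lie_brP (-1) Ly Lx; rewrite scaleN1r addrC. Qed.

Lemma lie_br_gen M N m n : M m -> N n -> lie_br br M N (br m n + br n m).
Proof.
move=> Mm Nn; exists [:: (1, m, n)]; split; first by move=> p /[!inE] /eqP ->.
by rewrite big_seq1 scale1r.
Qed.

Lemma lie_br_ind M N (P : V -> Prop) :
  P 0 ->
  (forall a m n x, M m -> N n -> P x -> P (a *: (br m n + br n m) + x)) ->
  forall x, lie_br br M N x -> P x.
Proof.
move=> P0 Pstep _ [s [Hs ->]]; elim: s Hs => [|p s IHs] Hs; first by rewrite big_nil.
rewrite big_cons; have [Mp Np] := Hs p (mem_head p s).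
by apply: Pstep Mp Np (IHs _) => q sq; apply: Hs; rewrite inE sq orbT.
Qed.

Lemma lie_brSr M N N' :
  (forall x, N x -> N' x) -> forall x, lie_br br M N x -> lie_br br M N' x.
Proof.
move=> NN'; apply: lie_br_ind => [|a m n x Mm /NN' N'n Lx]; first exact: lie_br0.
exact/lie_brP/Lx/lie_br_gen.
Qed.

Lemma lie_br_subT M N x : lie_br br M N x -> lie_br br M (@full V) x.
Proof. exact: lie_brSr. Qed.

Lemma lie_br_ideal M I : ideal br I -> forall x, lie_br br M I x -> I x.
Proof.
move=> [[I0 Iadd] Ibr]; apply: lie_br_ind => // a m n x _ In Ix.
have [Imn Inm] := Ibr m n In.
have := Iadd 1 _ _ Imn Inm; rewrite scale1r => Igen.
exact: Iadd Igen Ix.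
Qed.

End LieBracket.

Lemma lie_br_addr (K : fieldType) (V : lmodType K) (br : {bilinear V -> V -> V})
    (M N N1 N2 : V -> Prop) :
  (forall x, N x -> addsp N1 N2 x) ->
  forall x, lie_br br M N x -> addsp (lie_br br M N1) (lie_br br M N2) x.
Proof.
move=> splitN; apply: lie_br_ind.
  by exists 0, 0; split; rewrite ?addr0 //; exact: lie_br0.
move=> a m _ _ Mm /splitN[n1 [n2 [N1n1 N2n2 ->]]] [u [v [Lu Lv ->]]].
exists (a *: (br m n1 + br n1 m) + u), (a *: (br m n2 + br n2 m) + v).
split; [exact/lie_brP/Lu/lie_br_gen | exact/lie_brP/Lv/lie_br_gen |].
by rewrite linearDr linearDl addrACA scalerDr addrACA.
Qed.

Lemma kernel_ideal (K : fieldType) (V W : lmodType K) (brV : V -> V -> V)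
    (brW : {bilinear W -> W -> W}) (phi : {linear V -> W}) :
  {morph phi : x y / brV x y >-> brW x y} -> ideal brV (kernel phi).
Proof.
move=> phi_br; split.
  by split=> [|a x y]; rewrite /kernel ?raddf0 // linearP => -> ->; rewrite scaler0 addr0.
by move=> x y; rewrite /kernel !phi_br => ->; rewrite linear0r linear0l.
Qed.

Section LieBracketHom.
Variables (K : fieldType) (V W : lmodType K).
Variables (brV : V -> V -> V) (brW : W -> W -> W) (phi : {linear V -> W}).
Hypothesis phi_br : {morph phi : x y / brV x y >-> brW x y}.
Variables (M N : V -> Prop) (M' N' : W -> Prop).

Lemma lie_br_image :
  (forall x, M x -> M' (phi x)) -> (forall x, N x -> N' (phi x)) ->
  forall x, lie_br brV M N x -> lie_br brW M' N' (phi x).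
Proof.
move=> MM' NN'; apply: lie_br_ind => [|a m n x Mm Nn Lx].
  by rewrite raddf0; exact: lie_br0.
rewrite linearP linearD !phi_br.
by apply/lie_brP/Lx/lie_br_gen; [apply: MM' | apply: NN'].
Qed.

Lemma lie_br_lift :
  (forall y, M' y -> exists x, M x /\ phi x = y) ->
  (forall y, N' y -> exists x, N x /\ phi x = y) ->
  forall y, lie_br brW M' N' y -> exists x, lie_br brV M N x /\ phi x = y.
Proof.
move=> liftM liftN; apply: lie_br_ind.
  by exists 0; split; [exact: lie_br0 | rewrite raddf0].
move=> a _ _ _ /liftM[m [Mm <-]] /liftN[n [Nn <-]] [x [Lx <-]].
exists (a *: (brV m n + brV n m) + x); split; first exact/lie_brP/Lx/lie_br_gen.
by rewrite linearP linearD !phi_br.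
Qed.

End LieBracketHom.

Section Presentation.
Variables (K : fieldType) (F G : lmodType K).
Variables (brF : {bilinear F -> F -> F}) (brG : {bilinear G -> G -> G}).
Variable rho : {linear F -> G}.
Hypothesis rho_br : {morph rho : x y / brF x y >-> brG x y}.
Hypothesis rho_surj : forall y, exists x, rho x = y.
Variables (N : G -> Prop) (S R' : F -> Prop).
Hypothesis S0 : S 0.
Hypothesis N_image : forall y, N y <-> exists x, S x /\ rho x = y.
Hypothesis R'_preim : forall x, R' x <-> N (rho x).

Let R := kernel rho.

Lemma rho_lift_full y : @full G y -> exists x, @full F x /\ rho x = y.
Proof. by move=> _; have [x rx] := rho_surj y; exists x. Qed.

Lemma R_sub_R' x : R x -> R' x.
Proof. by move=> Rx; apply/R'_preim/N_image; exists 0; rewrite raddf0 Rx. Qed.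

Lemma S_sub_R' x : S x -> R' x.
Proof. by move=> Sx; apply/R'_preim/N_image; exists x. Qed.

Lemma R'_addsp x : R' x -> addsp S R x.
Proof.
move=> /R'_preim/N_image[s [Ss rs]]; exists s, (x - s); split=> //.
  by rewrite /R /kernel linearB rs subrr.
by rewrite addrC subrK.
Qed.

Lemma induces_incl :
  induces (meet R (lie_br brF (@full F) S))
    (meet (lie_br brF (@full F) R) (lie_br brF (@full F) S))
    (schur_num brF R) (schur_den brF R) id.
Proof. by split=> x [Rx Lx] //; split=> //; exact: lie_br_subT Lx. Qed.

Lemma induces_kernel_incl :
  induces (schur_num brF R) (schur_den brF R) (schur_num brF R') (schur_den brF R') id.
Proof. by split; [move=> x [/R_sub_R'] | exact: lie_brSr R_sub_R']. Qed.

Lemma induces_rho :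
  induces (schur_num brF R') (schur_den brF R')
    (meet N (lie_br brG (@full G) (@full G))) (lie_br brG (@full G) N) rho.
Proof.
split=> [x [/R'_preim Nx Lx] | ]; first by split=> //; apply: (lie_br_image rho_br) Lx.
by apply: (lie_br_image rho_br) => // x /R'_preim.
Qed.

Lemma exact_at_multiplier :
  exact_at (meet R (lie_br brF (@full F) S)) id (schur_num brF R) (schur_den brF R) id
    (schur_den brF R').
Proof.
move=> x [Rx _]; split.
  case/(lie_br_addr R'_addsp) => u [v [Lu Lv xE]].
  have Rv : R v := lie_br_ideal (kernel_ideal rho_br) Lv.
  exists u; split; last by rewrite xE addrC addKr.
  by split=> //; move: Rx; rewrite /R /kernel xE linearD Rv addr0.
move=> [y [[_ Ly] Lxy]]; rewrite -(subrK y x).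
by apply: lie_brD; [exact: (lie_brSr R_sub_R' Lxy) | exact: (lie_brSr S_sub_R' Ly)].
Qed.

Lemma exact_at_multiplier_quotient :
  exact_at (schur_num brF R) id (schur_num brF R') (schur_den brF R') rho
    (lie_br brG (@full G) N).
Proof.
move=> x [_ Lx]; split.
  case/(lie_br_lift rho_br rho_lift_full (fun y => proj1 (N_image y))) => z [Lz rz].
  exists (x - z); split.
    split; first by rewrite /R /kernel linearB rz subrr.
    exact/lie_brB/(lie_br_subT Lz).
  by rewrite opprB addrCA subrr addr0; exact: (lie_brSr S_sub_R' Lz).
move=> [y [[Ry _] Lxy]]; have <- : rho (x - y) = rho x by rewrite linearB Ry subr0.
by apply: (lie_br_image rho_br) Lxy => // z /R'_preim.
Qed.

Lemma multiplier_quotient_onto z :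
  meet N (lie_br brG (@full G) (@full G)) z ->
  exists x, schur_num brF R' x /\ lie_br brG (@full G) N (z - rho x).
Proof.
case=> Nz /(lie_br_lift rho_br rho_lift_full rho_lift_full)[x [Lx rx]].
exists x; rewrite rx subrr; split; last exact: lie_br0.
by split=> //; apply/R'_preim; rewrite rx.
Qed.

Theorem presentation_exact_subquot4 :
  exact_subquot4
    (meet R (lie_br brF (@full F) S))
    (meet (lie_br brF (@full F) R) (lie_br brF (@full F) S)) id
    (schur_num brF R) (schur_den brF R) id
    (schur_num brF R') (schur_den brF R') rho
    (meet N (lie_br brG (@full G) (@full G))) (lie_br brG (@full G) N).
Proof.
split; first exact: induces_incl.
split; first exact: induces_kernel_incl.
split; first exact: induces_rho.
split; first by move=> x [_ Lx] Ly; split.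
split; first exact: exact_at_multiplier.
split; first exact: exact_at_multiplier_quotient.
exact: multiplier_quotient_onto.
Qed.

End Presentation.

Theorem mainTheorem6 (K : fieldType) (hK : (2%:R : K) != 0)
  (F : lmodType K) (brF : F -> F -> F) (hF : free_leibniz brF)
  (G : lmodType K) (brG : G -> G -> G) (hG : leibniz brG)
  (rho : F -> G) (hrho : leibniz_hom brF brG rho)
  (rho_surj : forall y, exists x, rho x = y)
  (N : G -> Prop) (hN : ideal brG N)
  (S : F -> Prop) (hS : ideal brF S)
  (hSN : forall y, N y <-> exists x, S x /\ rho x = y)
  (* Q with pi : G -> Q surjective with kernel N is the quotient g/n *)
  (Q : lmodType K) (brQ : Q -> Q -> Q) (hQ : leibniz brQ)
  (pi : G -> Q) (hpi : leibniz_hom brG brQ pi)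
  (pi_surj : forall q, exists y, pi y = q)
  (hker : forall y, pi y = 0 <-> N y) :
  let R := kernel rho in
  let R' := kernel (fun x => pi (rho x)) in
  exact_subquot4
    (meet R (lie_br brF (@full F) S))
    (meet (lie_br brF (@full F) R) (lie_br brF (@full F) S))
    id
    (schur_num brF R) (schur_den brF R)
    id
    (schur_num brF R') (schur_den brF R')
    rho
    (meet N (lie_br brG (@full G) (@full G))) (lie_br brG (@full G) N).
Proof.
move=> R R'.
have [rho_lin rho_br] := hrho.
have [F_leib _] := hF.
have [[S0 _] _] := hS.
have R'_preim x : R' x <-> N (rho x) by exact: hker.
exact: (presentation_exact_subquot4 (brF := bilinear_of F_leib) (brG := bilinear_of hG)
  (rho := linear_of rho_lin) rho_br rho_surj S0 hSN R'_preim).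
Qed.
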